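(* Let $\sigma_X=(\sigma_X^0,\sigma_X[\cdot,\cdot])$ be a memory-one strategy for player $X$, and let $\alpha,\beta,\gamma\in\mathbb{R}$. Suppose there is a bounded measurable function $\psi:S_X\to\mathbb{R}$ such that for every $x\in S_X$ and $y\in S_Y$, $$\alpha u_X(x,y)+\beta u_Y(x,y)+\gamma=\psi(x)-\lambda\int_{S_X}\psi(s)\,d\sigma_X[x,y](s)-(1-\lambda)\int_{S_X}\psi(s)\,d\sigma_X^0(s).$$ Then for every behavioral strategy $\sigma_Y$ of player $Y$, the expected payoffs satisfy $\alpha\pi_X+\beta\pi_Y+\gamma=0$.
   Context: Standing framework. Let $S_X,S_Y$ be measurable spaces (the action spaces of players $X$ and $Y$), $u_X,u_Y:S_X\times S_Y\to\mathbb{R}$ bounded measurable payoff functions, and $\lambda\in(0,1)$ a discount factor. For $T\ge 0$ let $\mathcal{H}^T=(S_X\times S_Y)^T$ be the set of histories of length $T$ (with $\mathcal{H}^0=\{\varnothing\}$) and $\mathcal{H}=\bigsqcup_{T\ge0}\mathcal{H}^T$. A behavioral strategy for $X$ (resp. $Y$) is a Markov kernel $\sigma_X$ from $\mathcal{H}$ to $S_X$ (resp. $\sigma_Y$ from $\mathcal{H}$ to $S_Y$), assigning to each history a probability measure on the action space. A memory-one strategy for $X$ is a behavioral strategy determined by a probability measure $\sigma_X^0$ on $S_X$ (the initial action, used at the empty history) and a Markov kernel $(x,y)\mapsto\sigma_X[x,y]$ from $S_X\times S_Y$ to $S_X$, with $\sigma_X[h^T]=\sigma_X[x_{T-1},y_{T-1}]$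 for $h^T=((x_0,y_0),\dots,(x_{T-1},y_{T-1}))$, $T\ge1$. Given behavioral strategies $\sigma_X,\sigma_Y$, put $\sigma(h)=\sigma_X[h]\otimes\sigma_Y[h]$ (product measure on $S_X\times S_Y$) and define probability measures $\mu_t$ on $\mathcal{H}^{t+1}$ by $\mu_0=\sigma(\varnothing)$ and $\mu_t(E'\times E)=\int_{E'}\sigma(h)(E)\,d\mu_{t-1}(h)$ for measurable $E'\subseteq\mathcal{H}^t$, $E\subseteq S_X\times S_Y$ (uniquely extended). Let $\nu_t(E)=\mu_t(\mathcal{H}^t\times E)$ be the distribution of the action pair at time $t$. The expected payoffs are $\pi_X=(1-\lambda)\sum_{t=0}^\infty\lambda^t\int_{S_X\times S_Y}u_X\,d\nu_t$ and $\pi_Y=(1-\lambda)\sum_{t=0}^\infty\lambda^t\int_{S_X\times S_Y}u_Y\,d\nu_t$. *)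

From HB Require Import structures.
From mathcomp Require Import all_boot all_order all_algebra.
From mathcomp Require Import all_classical all_reals all_analysis.
Set Implicit Arguments.
Unset Strict Implicit.
Unset Printing Implicit Defensive.
Import Order.TTheory GRing.Theory Num.Theory.
Import numFieldNormedType.Exports.
Local Open Scope classical_set_scope.
Local Open Scope ring_scope.

Section histories.
Context {dX dY : measure_display} (SX : measurableType dX) (SY : measurableType dY).

Fixpoint histD (T : nat) : measure_display :=
  match T with
  | 0 => (dX, dY).-prod%mdisp
  | T'.+1 => (histD T', (dX, dY).-prod%mdisp).-prod%mdisp
  end.

(* histS T = H^(T+1) = (S_X * S_Y)^(T+1), as the iterated product
   H^(T+1) = H^T * (S_X * S_Y) with the product sigma-algebra. *)
Fixpoint histS (T : nat) : measurableType (histD T) :=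
  match T return measurableType (histD T) with
  | 0 => (SX * SY)%type
  | T'.+1 => (histS T' * (SX * SY))%type
  end.

Definition lastpair (T : nat) : histS T -> (SX * SY)%type :=
  match T return histS T -> (SX * SY)%type with
  | 0 => fun h => h
  | T'.+1 => fun h => h.2
  end.
End histories.
Arguments lastpair {dX dY} SX SY T.

Section play.
Local Open Scope ereal_scope.
Context {dX dY : measure_display} (SX : measurableType dX) (SY : measurableType dY)
  (R : realType).
(* A behavioral strategy is given by its value at the empty history
   (a probability measure) and, for each T, its values on histories of
   length T+1 (a Markov kernel from H^(T+1)). *)
Variables (sX0 : set SX -> \bar R) (sXn : forall (T : nat), histS SX SY T -> set SX -> \bar R).
Variables (sY0 : set SY -> \bar R) (sYn : forall (T : nat), histS SX SY T -> set SY -> \bar R).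
Arguments sXn : clear implicits.
Arguments sYn : clear implicits.

(* mu t : the measure on H^(t+1);
   mu 0 = sigma(empty) = sX0 (x) sY0,
   mu (t+1) A = \int_{h in H^(t+1)} sigma(h)(section of A at h) d(mu t),
   with sigma(h) = sXn h (x) sYn h (product measure). *)
Fixpoint hmu (t : nat) : set (histS SX SY t) -> \bar R :=
  match t return set (histS SX SY t) -> \bar R with
  | 0 => (sX0 \x sY0)
  | t'.+1 => fun A => \int[@hmu t']_h ((sXn t' h \x sYn t' h) (xsection A h))
  end.
Arguments hmu : clear implicits.

(* nu t E = mu t (H^t x E) : distribution of the action pair at time t *)
Definition hnu (t : nat) (E : set (SX * SY)) : \bar R :=
  hmu t (lastpair SX SY t @^-1` E).

Definition payoff (lambda : R) (u : SX * SY -> R) : R :=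
  let term (t : nat) : R := fine (\int[hnu t]_z (u z)%:E) in
  ((1 - lambda) * \big[+%R/0%R]_(0 <= t <oo) (lambda ^+ t * term t))%R.
End play.

From HB Require Import structures.
From mathcomp Require Import all_boot all_order all_algebra.
From mathcomp Require Import all_classical all_reals all_analysis.
From mathcomp Require Import measurable_realfun.
From mathcomp Require Import ring.
Import Order.TTheory GRing.Theory Num.Theory.
Import numFieldNormedType.Exports.
Set Implicit Arguments.
Unset Strict Implicit.
Unset Printing Implicit Defensive.
Local Open Scope classical_set_scope.
Local Open Scope ring_scope.

(* Write b_t for the expectation of psi at the action of X at time t.  Integrating
   the hypothesis on psi against the law of the history at time t gives, for every t,
     alpha E_t[u_X] + beta E_t[u_Y] + gamma = b_t - lambda b_(t+1) - (1 - lambda) b_0,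
   and the lambda-discounted sum of the right-hand side telescopes to
   lim lambda^n (b_0 - b_n) = 0.  The hypothesis is unchanged when a constant is added
   to psi, so psi may be assumed nonnegative, which is what Tonelli's theorem for the
   kernel products needs.  The set functions mu_t of the statement are realised as probability
   measures by iterated kernel products out of the one-point space. *)

Section discounted_series.
Context (R : realType) (lambda : R).
Hypotheses (lambda_ge0 : 0 <= lambda) (lambda_lt1 : lambda < 1).

Let normr_lambda_lt1 : `|lambda| < 1.
Proof. by rewrite ger0_norm. Qed.

Lemma is_cvg_discounted_series (a : nat -> R) :
  (exists K : R, forall t, `|a t| <= K) -> cvgn (series (fun t => lambda ^+ t * a t)).
Proof.
move=> [K aK]; have K0 : 0 <= K by exact: le_trans (aK 0%N).
apply: normed_cvg; apply: (@series_le_cvg _ _ (geometric K lambda)).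
- by move=> n; exact: normr_ge0.
- by move=> n; exact: geometric_ge0.
- move=> n; rewrite /geometric /= normrM normrX ger0_norm // mulrC.
  by apply: ler_wpM2r; [exact: exprn_ge0 | exact: aK].
- exact: is_cvg_geometric_series.
Qed.

Lemma discounted_series_affine (a b : nat -> R) (alpha beta gamma : R) :
  (exists K : R, forall t, `|a t| <= K) -> (exists K : R, forall t, `|b t| <= K) ->
  alpha * ((1 - lambda) * limn (series (fun t => lambda ^+ t * a t)))
  + beta * ((1 - lambda) * limn (series (fun t => lambda ^+ t * b t))) + gamma
  = (1 - lambda) * limn (series (fun t => lambda ^+ t * (alpha * a t + beta * b t + gamma))).
Proof.
move=> /is_cvg_discounted_series ca /is_cvg_discounted_series cb.
have -> : series (fun t => lambda ^+ t * (alpha * a t + beta * b t + gamma))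
  = (fun n => alpha * series (fun t => lambda ^+ t * a t) n
      + beta * series (fun t => lambda ^+ t * b t) n + series (geometric gamma lambda) n).
  apply/funext => n; rewrite /series /= !big_distrr -!big_split /=.
  by apply: eq_bigr => t _; rewrite /geometric; ring.
rewrite (cvg_lim _ (cvgD (cvgD (cvgMl_tmp (a := alpha) ca) (cvgMl_tmp (a := beta) cb))
  (cvg_geometric_series (a := gamma) normr_lambda_lt1))) //.
have lambda1 : 1 - lambda != 0 by rewrite subr_eq0 gt_eqF.
by field.
Qed.

Lemma series_discounted_telescope (b : nat -> R) n :
  series (fun t => lambda ^+ t * (b t - lambda * b t.+1 - (1 - lambda) * b 0%N)) n
  = lambda ^+ n * (b 0%N - b n).
Proof.
elim: n => [|n IH]; first by rewrite /series /= big_geq // subrr mulr0.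
by rewrite seriesSr IH exprS; ring.
Qed.

Lemma lim_discounted_telescope (b : nat -> R) : (exists K : R, forall t, `|b t| <= K) ->
  limn (series (fun t => lambda ^+ t * (b t - lambda * b t.+1 - (1 - lambda) * b 0%N))) = 0.
Proof.
move=> [K bK]; apply: cvg_lim => //.
have -> : series (fun t => lambda ^+ t * (b t - lambda * b t.+1 - (1 - lambda) * b 0%N))
  = (fun n => lambda ^+ n * (b 0%N - b n)).
  by apply/funext => n; exact: series_discounted_telescope.
apply: (@squeeze_cvgr _ _ _ _ (fun n => - geometric (K + K) lambda n)
  (geometric (K + K) lambda)); last 2 first.
- by rewrite -oppr0; apply: cvgN; exact: cvg_geometric.
- exact: cvg_geometric.
apply: nearW => n; rewrite -ler_norml normrM normrX ger0_norm // /geometric /= mulrC.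
apply: ler_wpM2r; first exact: exprn_ge0.
by apply: le_trans (ler_normB _ _) _; exact: lerD.
Qed.

End discounted_series.

Section probability_integrals.
Context d (T : measurableType d) (R : realType) (mu : {measure set T -> \bar R}).
Hypothesis mu1 : mu setT = 1%E.

Lemma bounded_integrable (f : T -> R) : measurable_fun setT f ->
  (exists M : R, forall x, `|f x| <= M) -> mu.-integrable setT (EFin \o f).
Proof.
move=> mf [M fM]; apply: measurable_bounded_integrable => //; first by rewrite mu1 ltry.
exists M; split; first exact: num_real.
by move=> N MN x _; exact: le_trans (fM x) (ltW MN).
Qed.

Lemma integrable_cst_prob (r : R) : mu.-integrable setT (EFin \o (fun _ => r)).
Proof. by apply: bounded_integrable; [exact: measurable_cst | exists `|r|]. Qed.

Lemma Rintegral_cst_prob (r : R) : \int[mu]_x r = r.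
Proof. by rewrite Rintegral_cst // mu1 mulr1. Qed.

Lemma Rintegral_norm_le (f : T -> R) (K : R) : measurable_fun setT f ->
  (forall x, `|f x| <= K) -> `|\int[mu]_x f x| <= K.
Proof.
move=> mf fK; have If : mu.-integrable setT (EFin \o f).
  by apply: bounded_integrable => //; exists K.
apply: le_trans (le_normr_Rintegral measurableT If) _.
rewrite -[leRHS]Rintegral_cst_prob.
exact: le_Rintegral measurableT (integrable_norm If) (integrable_cst_prob K) (fun x _ => fK x).
Qed.

Lemma Rintegral_affine (f g : T -> R) (a b c : R) :
  measurable_fun setT f -> (exists M : R, forall x, `|f x| <= M) ->
  measurable_fun setT g -> (exists M : R, forall x, `|g x| <= M) ->
  \int[mu]_x (a * f x + b * g x + c) = a * \int[mu]_x f x + b * \int[mu]_x g x + c.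
Proof.
move=> mf /(bounded_integrable mf) If mg /(bounded_integrable mg) Ig.
have IZ h r : mu.-integrable setT (EFin \o h) ->
    mu.-integrable setT (EFin \o (fun x => r * h x)).
  move=> Ih; apply: (eq_integrable measurableT _ _ _ (integrableZl measurableT r Ih)).
  by move=> x _ /=; rewrite EFinM.
have Iab : mu.-integrable setT (EFin \o (fun x => a * f x + b * g x)).
  apply: (eq_integrable measurableT _ _ _ (integrableD measurableT (IZ _ a If) (IZ _ b Ig))).
  by move=> x _ /=; rewrite EFinD.
rewrite RintegralD ?integrable_cst_prob // RintegralD ?IZ // !RintegralZl //.
by rewrite Rintegral_cst_prob.
Qed.

End probability_integrals.

Section eq_integral_measurable.
Import HBNNSimple.

Lemma eq_integral_measurable d (T : measurableType d) (R : realType)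
    (m1 m2 : set T -> \bar R) (f : T -> \bar R) :
  (forall A, measurable A -> m1 A = m2 A) -> (\int[m1]_x f x = \int[m2]_x f x)%E.
Proof.
move=> m12; rewrite /integral; congr (ereal_sup _ - ereal_sup _)%E;
  apply/seteqP; split => _ [h hP <-]; exists h => //; apply: eq_fsbigr => r _;
  by rewrite m12.
Qed.

End eq_integral_measurable.

Local Open Scope ereal_scope.

Section kprecomp.
Context d d' d'' (X : measurableType d) (Y : measurableType d') (Z : measurableType d'')
  (R : realType) (f : X -> Y) (k : R.-pker Y ~> Z).

Definition kprecomp (mf : measurable_fun setT f) (x : X) : {measure set Z -> \bar R} :=
  k (f x).

Hypothesis mf : measurable_fun setT f.

Let measurable_kprecomp (U : set Z) :
  measurable U -> measurable_fun setT (fun x => kprecomp mf x U : \bar R).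
Proof. by move=> mU; exact: measurableT_comp (measurable_kernel k U mU) mf. Qed.

HB.instance Definition _ := isKernel.Build _ _ X Z R (kprecomp mf) measurable_kprecomp.

Let kprecomp_prob x : kprecomp mf x setT = 1.
Proof. exact: prob_kernel. Qed.

HB.instance Definition _ := Kernel_isProbability.Build _ _ _ _ _ (kprecomp mf) kprecomp_prob.

End kprecomp.

Section kproduct_probability.
Context d0 d1 d2 (T0 : measurableType d0) (T1 : measurableType d1)
  (T2 : measurableType d2) (R : realType)
  (k1 : R.-pker T0 ~> T1) (k2 : R.-pker (T0 * T1) ~> T2).

Lemma mkproductE x A : measurable A ->
  mkproduct k1 k2 x A = \int[k1 x]_y k2 (x, y) (xsection A y).
Proof.
move=> mA; rewrite /mkproduct/= /kproduct; apply: eq_integral => y _.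
exact: kernel.intker_indicE.
Qed.

Let mkproduct_setT x : mkproduct k1 k2 x setT = 1.
Proof.
rewrite mkproductE //.
under eq_integral do rewrite xsectionE preimage_setT prob_kernel.
by rewrite integral_cst // mul1e prob_kernel.
Qed.

HB.instance Definition _ :=
  Kernel_isProbability.Build _ _ _ _ _ (mkproduct k1 k2) mkproduct_setT.

Lemma mkproduct_preimage_fst x B : measurable B ->
  mkproduct k1 k2 x (fst @^-1` B) = k1 x B.
Proof.
move=> mB; rewrite -setXT mkproductE; last exact: measurableX.
transitivity (\int[k1 x]_y (\1_B y)%:E); last by rewrite integral_indic // setIT.
apply: eq_integral => y _; have [yB|yB] := boolP (y \in B).
  by rewrite in_xsectionX // prob_kernel indicE yB.
by rewrite notin_xsectionX // measure0 indicE (negbTE yB).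
Qed.

Lemma mkproduct_preimage_snd x E : measurable E ->
  mkproduct k1 k2 x (snd @^-1` E) = \int[k1 x]_y k2 (x, y) E.
Proof.
move=> mE; rewrite mkproductE; last by rewrite -setTX; exact: measurableX.
by apply: eq_integral => y _; rewrite xsection_preimage_snd.
Qed.

Lemma integral_mkproduct_fst x (g : T1 -> \bar R) :
  (forall y, 0 <= g y) -> measurable_fun setT g ->
  \int[mkproduct k1 k2 x]_z g z.1 = \int[k1 x]_y g y.
Proof.
move=> g0 mg.
transitivity (\int[pushforward (mkproduct k1 k2 x) fst]_(y in setT) g y).
  by rewrite ge0_integral_pushforward // preimage_setT.
by apply: eq_measure_integral => A mA _; exact: mkproduct_preimage_fst.
Qed.

Lemma integral_mkproduct_snd x (g : T2 -> \bar R) :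
  (forall z, 0 <= g z) -> measurable_fun setT g ->
  \int[mkproduct k1 k2 x]_z g z.2 = \int[k1 x]_y \int[k2 (x, y)]_z g z.
Proof.
move=> g0 mg.
transitivity (\int[pushforward (mkproduct k1 k2 x) snd]_(z in setT) g z).
  by rewrite ge0_integral_pushforward // preimage_setT.
rewrite -integral_kcomp //.
by apply: eq_measure_integral => A mA _; exact: mkproduct_preimage_snd.
Qed.

End kproduct_probability.

Section history_law.
Context (R : realType) {dX dY : measure_display}
  (SX : measurableType dX) (SY : measurableType dY)
  (sX0 : probability SX R) (kX : R.-pker (SX * SY)%type ~> SX)
  (sY0 : probability SY R) (sYn : forall T : nat, R.-pker (histS SX SY T) ~> SY).

Local Notation lastpair := (lastpair SX SY).

Lemma measurable_lastpair t : measurable_fun setT (lastpair t).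
Proof. by case: t => [|t] /=; [exact: measurable_id | exact: measurable_snd]. Qed.

Definition kstage t : R.-pker (histS SX SY t) ~> (SX * SY)%type :=
  mkproduct (kprecomp kX (@measurable_lastpair t)) (kprecomp (sYn t) measurable_fst).

Fixpoint khistory t : R.-pker unit ~> histS SX SY t :=
  match t with
  | 0 => mkproduct (kprobability (measurable_cst (sX0 : pprobability SX R)))
          (kprecomp (kprobability (measurable_cst (sY0 : pprobability SY R))) measurable_fst)
  | t'.+1 => mkproduct (khistory t') (kprecomp (kstage t') measurable_snd)
  end.

Definition history_law t := khistory t tt.

Local Notation sXn := (fun (T : nat) (h : histS SX SY T) => kX (lastpair T h)).
Local Notation sYn' := (fun (T : nat) (h : histS SX SY T) => sYn T h).
Local Notation mu_ t := (@hmu _ _ _ _ _ sX0 sXn sY0 sYn' t).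
Local Notation nu_ t := (hnu sX0 sXn sY0 sYn' t).

Lemma hmuE t A : measurable A -> mu_ t A = history_law t A.
Proof.
elim: t A => [|t IH] A mA; rewrite /history_law /= mkproductE //.
transitivity (\int[mu_ t]_h kstage t h (xsection A h)).
  congr (integral _ _ _); apply/funext => h.
  by rewrite /kstage mkproductE //; exact: measurable_xsection.
exact: eq_integral_measurable.
Qed.

Lemma integral_hnu t (g : SX * SY -> \bar R) : measurable_fun setT g ->
  (history_law t).-integrable setT (g \o lastpair t) ->
  \int[nu_ t]_z g z = \int[history_law t]_h g (lastpair t h).
Proof.
move=> mg ig.
transitivity (\int[pushforward (history_law t) (lastpair t)]_(z in setT) g z).
  apply: eq_integral_measurable => E mE; rewrite /hnu /pushforward hmuE //.
  by rewrite -[X in measurable X]setTI; exact: measurable_lastpair.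
by rewrite (integral_pushforward (@measurable_lastpair t)) // preimage_setT.
Qed.

Lemma history_law_setT t : history_law t setT = 1.
Proof. exact: prob_kernel. Qed.

Lemma integral_history_law0_fst (g : SX -> \bar R) :
  (forall x, 0 <= g x) -> measurable_fun setT g ->
  \int[history_law 0]_h g (lastpair 0 h).1 = \int[sX0]_x g x.
Proof. exact: integral_mkproduct_fst. Qed.

Lemma integral_history_lawS_fst t (g : SX -> \bar R) :
  (forall x, 0 <= g x) -> measurable_fun setT g ->
  \int[history_law t.+1]_h g (lastpair t.+1 h).1
  = \int[history_law t]_h \int[kX (lastpair t h)]_x g x.
Proof.
move=> g0 mg; rewrite /history_law /=.
rewrite (integral_mkproduct_snd _ _ _ (g := fun z => g z.1)) //; last first.
  exact: measurableT_comp mg measurable_fst.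
by apply: eq_integral => h _; exact: integral_mkproduct_fst.
Qed.

Lemma Rintegral_hnu t (u : SX * SY -> R) : measurable_fun setT u ->
  (exists M : R, forall z, (`|u z| <= M)%R) ->
  fine (\int[nu_ t]_z (u z)%:E) = (\int[history_law t]_h u (lastpair t h))%R.
Proof.
move=> mu [K uK]; rewrite /Rintegral integral_hnu //; first exact/measurable_EFinP.
apply: (bounded_integrable (history_law_setT t)); last by exists K.
exact: measurableT_comp mu (@measurable_lastpair t).
Qed.

Lemma Rintegral_hnu_norm_le t (u : SX * SY -> R) (K : R) : measurable_fun setT u ->
  (forall z, `|u z| <= K)%R -> (`|fine (\int[nu_ t]_z (u z)%:E)| <= K)%R.
Proof.
move=> mu uK; rewrite Rintegral_hnu //; last by exists K.
apply: (Rintegral_norm_le (history_law_setT t)) => [|h]; last exact: uK.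
exact: measurableT_comp mu (@measurable_lastpair t).
Qed.

End history_law.

Local Close Scope ereal_scope.

Section nonnegative_potential.
Context (R : realType) {dX dY : measure_display}
  (SX : measurableType dX) (SY : measurableType dY)
  (sX0 : probability SX R) (kX : R.-pker (SX * SY)%type ~> SX)
  (sY0 : probability SY R) (sYn : forall T : nat, R.-pker (histS SX SY T) ~> SY).
Variables (psi : SX -> R) (M : R).
Hypotheses (mpsi : measurable_fun setT psi) (psi_ge0 : forall x, 0 <= psi x)
  (psiM : forall x, `|psi x| <= M).

Local Notation lastpair := (lastpair SX SY).
Local Notation law := (history_law sX0 kX sY0 sYn).
Local Notation sXn := (fun (T : nat) (h : histS SX SY T) => kX (lastpair T h)).
Local Notation sYn' := (fun (T : nat) (h : histS SX SY T) => sYn T h).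
Local Notation payoff := (payoff sX0 sXn sY0 sYn').
Local Notation expected t u := (fine (\int[hnu sX0 sXn sY0 sYn' t]_z (u z)%:E)).

Let next_psi z := \int[kX z]_x psi x.
Let psi_at t := \int[law t]_h psi (lastpair t h).1.

Let kX_setT z : kX z setT = 1%E.
Proof. exact: prob_kernel. Qed.

Let measurable_next_psi : measurable_fun setT next_psi.
Proof.
apply: (measurableT_comp (fine_measurable measurableT)).
apply: (measurable_fun_integral_kernel (measurable_kernel kX)).
  by move=> z; rewrite lee_fin.
exact/measurable_EFinP.
Qed.

Let EFin_psi_ge0 x : (0 <= (EFin \o psi) x)%E.
Proof. by rewrite /= lee_fin. Qed.

Let measurable_EFin_psi : measurable_fun setT (EFin \o psi).
Proof. exact/measurable_EFinP. Qed.

Let psi_at0 : psi_at 0 = \int[sX0]_x psi x.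
Proof.
by rewrite /psi_at /Rintegral (integral_history_law0_fst _ _ _ _ EFin_psi_ge0 measurable_EFin_psi).
Qed.

Let psi_atS t : psi_at t.+1 = \int[law t]_h next_psi (lastpair t h).
Proof.
rewrite /psi_at /Rintegral.
rewrite (integral_history_lawS_fst _ _ _ _ t EFin_psi_ge0 measurable_EFin_psi).
congr fine; apply: eq_integral => h _; rewrite /next_psi /Rintegral fineK //.
apply: (integrable_fin_num measurableT).
by apply: (bounded_integrable (kX_setT (lastpair t h)) mpsi); exists M.
Qed.

Let psi_at_bounded : exists K : R, forall t, `|psi_at t| <= K.
Proof.
exists M => t; apply: (Rintegral_norm_le (history_law_setT _ _ _ _ t)) => [|h]; last exact: psiM.
exact: measurableT_comp mpsi (measurableT_comp measurable_fst (@measurable_lastpair _ _ SX SY t)).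
Qed.
Variables (uX uY : SX * SY -> R) (lambda alpha beta gamma : R).
Hypotheses (muX : measurable_fun setT uX) (muY : measurable_fun setT uY)
  (buX : exists M : R, forall z, `|uX z| <= M)
  (buY : exists M : R, forall z, `|uY z| <= M).
Hypothesis hpsi : forall (x : SX) (y : SY),
  alpha * uX (x, y) + beta * uY (x, y) + gamma =
  psi x - lambda * (\int[kX (x, y)]_s psi s) - (1 - lambda) * (\int[sX0]_s psi s).

Lemma expected_stage_identity t :
  alpha * expected t uX + beta * expected t uY + gamma
  = psi_at t - lambda * psi_at t.+1 - (1 - lambda) * psi_at 0.
Proof.
have mlast := @measurable_lastpair _ _ SX SY t.
have [KX uXK] := buX; have [KY uYK] := buY.
rewrite !Rintegral_hnu // psi_atS psi_at0.
rewrite -(Rintegral_affine (history_law_setT _ _ _ _ t)); last 4 first.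
- exact: measurableT_comp muX mlast.
- by exists KX.
- exact: measurableT_comp muY mlast.
- by exists KY.
transitivity (\int[law t]_h (1 * psi (lastpair t h).1 + (- lambda) * next_psi (lastpair t h)
                         + - ((1 - lambda) * \int[sX0]_s psi s))).
  apply: eq_Rintegral => h _; case: (lastpair t h) => x y /=.
  by rewrite hpsi /next_psi; ring.
rewrite (Rintegral_affine (history_law_setT _ _ _ _ t)); last 4 first.
- exact: measurableT_comp mpsi (measurableT_comp measurable_fst mlast).
- by exists M.
- exact: measurableT_comp measurable_next_psi mlast.
- by exists M => h; apply: (Rintegral_norm_le (kX_setT _)).
by rewrite /psi_at; ring.
Qed.

Hypotheses (lambda_gt0 : 0 < lambda) (lambda_lt1 : lambda < 1).

Lemma payoff_lincomb_nonnegative_potential :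
  alpha * payoff lambda uX + beta * payoff lambda uY + gamma = 0.
Proof.
have [KX uXK] := buX; have [KY uYK] := buY.
have bX : exists K : R, forall t, `|expected t uX| <= K.
  by exists KX => t; exact: Rintegral_hnu_norm_le.
have bY : exists K : R, forall t, `|expected t uY| <= K.
  by exists KY => t; exact: Rintegral_hnu_norm_le.
rewrite /payoff /= (discounted_series_affine (ltW lambda_gt0) lambda_lt1 _ _ _ bX bY).
under eq_fun do rewrite expected_stage_identity.
by rewrite lim_discounted_telescope ?mulr0 //; exact: ltW.
Qed.

End nonnegative_potential.

Theorem theorem1 (R : realType) (dX dY : measure_display)
  (SX : measurableType dX) (SY : measurableType dY)
  (uX uY : SX * SY -> R) (lambda : R)
  (muX : measurable_fun setT uX) (muY : measurable_fun setT uY)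
  (buX : exists M : R, forall z, `|uX z| <= M)
  (buY : exists M : R, forall z, `|uY z| <= M)
  (lambda_gt0 : 0 < lambda) (lambda_lt1 : lambda < 1)
  (* memory-one strategy of X: initial action and kernel sigma_X[x, y] *)
  (sX0 : probability SX R) (kX : R.-pker (SX * SY)%type ~> SX)
  (alpha beta gamma : R) (psi : SX -> R)
  (mpsi : measurable_fun setT psi)
  (bpsi : exists M : R, forall s, `|psi s| <= M)
  (hpsi : forall (x : SX) (y : SY),
     alpha * uX (x, y) + beta * uY (x, y) + gamma =
     psi x - lambda * (\int[kX (x, y)]_s psi s)
           - (1 - lambda) * (\int[sX0]_s psi s)) :
  (* every behavioral strategy of Y: value at the empty history, and
     Markov kernels on histories of each length T+1 *)
  forall (sY0 : probability SY R)
         (sYn : forall T : nat, R.-pker (histS SX SY T) ~> SY),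
  let sXn := fun (T : nat) (h : histS SX SY T) => kX (lastpair SX SY T h) in
  let sYn' := fun (T : nat) (h : histS SX SY T) => sYn T h in
  alpha * payoff sX0 sXn sY0 sYn' lambda uX
  + beta * payoff sX0 sXn sY0 sYn' lambda uY + gamma = 0.
Proof.
move=> sY0 sYn sXn sYn'.
have [M psiM] := bpsi.
have psiM_ge0 x : 0 <= psi x + M.
  by rewrite -lerBlDr sub0r; have := psiM x; rewrite ler_norml => /andP[].
have shift d (T : measurableType d) (mu : {measure set T -> \bar R}) (f : T -> R) :
    mu setT = 1%E -> measurable_fun setT f -> (forall x, `|f x| <= M) ->
    \int[mu]_x (f x + M) = \int[mu]_x f x + M.
  move=> mu1 mf fM; rewrite RintegralD ?Rintegral_cst_prob ?integrable_cst_prob //.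
  by apply: bounded_integrable => //; exists M.
apply: (payoff_lincomb_nonnegative_potential _ _ (psi := fun x => psi x + M) (M := M + M)) => //.
- exact: measurable_funD.
- by move=> x; rewrite ger0_norm // lerD2r (le_trans (ler_norm _) (psiM x)).
- move=> x y; rewrite hpsi !shift //; first ring.
  + exact: probability_setT.
  + exact: prob_kernel.
Qed.
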